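(* Define $\mathcal F_c(b):=P_c\mathcal F(b)$ for $b\in\mathcal N$. Fix $e\in\mathcal N$ with $\|e\|=1$, so that $\mathcal N=\mathrm{span}\{e\}$ is identified with $\mathbb R$ via $\xi\mapsto\xi e$. Then $\mathcal F_c$ is a stable cubic on $\mathcal N\cong\mathbb R$: there is a constant $C>0$ such that $\mathcal F_c(\xi e)=-C\xi^3e$ for all $\xi\in\mathbb R$.
   Context: $\mathcal H$ is a separable real Hilbert space. $A$ is a symmetric, non-positive linear operator on $\mathcal H$ generating a compact analytic semigroup. It has a one-dimensional kernel $\mathcal N$, and $P_c$ denotes the orthogonal projection onto $\mathcal N$. For $\alpha\ge0$, $\mathcal H^\alpha=D((1-A)^\alpha)$. $X$ is a Banach space with continuous dense embeddings $\mathcal H^\alpha\subset X\subset\mathcal H$ for some $\alpha\in(0,1/2)$. $\mathcal F:X\to X^*\subset\mathcal H^{-\alpha}$ is cubic, i.e. $\mathcal F(u)=\mathcal F(u,u,u)$ for a trilinear map, and there is $c>0$ with $\langle\mathcal F(u)-\mathcal F(v),u-v\rangle\le -c\|u-v\|_X^4$ for all $u,v\in X$. *)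

From HB Require Import structures.
From mathcomp Require Import all_boot all_order all_algebra.
From mathcomp Require Import all_classical all_reals all_analysis.
Set Implicit Arguments. Unset Strict Implicit. Unset Printing Implicit Defensive.
Import Order.TTheory GRing.Theory Num.Theory.
Import numFieldNormedType.Exports.
Local Open Scope classical_set_scope.
Local Open Scope ring_scope.

Section Defs.
Context {R : realType}.

Section HSide.
Context {H : normedModType R}.

Definition inner_product (ip : H -> H -> R) : Prop :=
  [/\ forall (a : R) (x y z : H), ip (a *: x + y) z = a * ip x z + ip y z,
      forall x y : H, ip x y = ip y x &
      forall x : H, ip x x = `|x| ^+ 2].

Definition separable_space : Prop := exists s : nat -> H, dense (range s).

Definition lin_op_on (DA : set H) (A : H -> H) : Prop :=
  DA 0 /\ forall (a : R) (x y : H), DA x -> DA y ->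
    DA (a *: x + y) /\ A (a *: x + y) = a *: A x + A y.

Definition symmetric_op (ip : H -> H -> R) (DA : set H) (A : H -> H) : Prop :=
  forall x y, DA x -> DA y -> ip (A x) y = ip x (A y).

Definition nonpositive_op (ip : H -> H -> R) (DA : set H) (A : H -> H) : Prop :=
  forall x, DA x -> ip (A x) x <= 0.

Definition kernel_op (DA : set H) (A : H -> H) : set H :=
  [set x | DA x /\ A x = 0].

Definition one_dimensional (N : set H) : Prop :=
  exists e0 : H, e0 != 0 /\ N = [set t *: e0 | t in [set: R]].
End HSide.

Section XSide.
Context {X : normedModType R}.

Definition linear4 (T : X -> X -> X -> X -> R) : Prop :=
  [/\ forall a x y b c v, T (a *: x + y) b c v = a * T x b c v + T y b c v,
      forall a x y b c v, T b (a *: x + y) c v = a * T b x c v + T b y c v,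
      forall a x y b c v, T b c (a *: x + y) v = a * T b c x v + T b c y v &
      forall a x y b c v, T b c v (a *: x + y) = a * T b c v x + T b c v y].

(* F : X -> X^* (an element f of X^* is represented by f : X -> R,
   i.e. F u v = <F(u), v>) is cubic: F(u) = T(u,u,u) for a trilinear
   map T : X^3 -> X^*  (each T a b c is a continuous linear functional). *)
Definition cubic_dual (F : X -> X -> R) : Prop :=
  exists T : X -> X -> X -> X -> R,
    [/\ linear4 T, forall a b c, continuous (T a b c) &
        forall u v, F u v = T u u u v].

Definition dissipative4 (F : X -> X -> R) (c : R) : Prop :=
  forall u v : X, F u (u - v) - F v (u - v) <= - (c * `|u - v| ^+ 4).
End XSide.

Section Proj.
Context {H X : normedModType R}.

(* Orthogonal projection onto N extended to functionals f in X^*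
   (N is contained in X via the embedding J): P_c f is the element
   p of N with <p, n>_H = <f, n> for every n in N. *)
Definition proj_dual (ip : H -> H -> R) (N : set H) (J : X -> H)
    (f : X -> R) : H :=
  xget 0 [set p | N p /\ forall x : X, N (J x) -> ip p (J x) = f x].

(* F_c(b) := P_c F(b) for b in N (b seen as an element of X via J) *)
Definition Fc (ip : H -> H -> R) (N : set H) (J : X -> H)
    (F : X -> X -> R) (b : H) : H :=
  proj_dual ip N J (F (xget 0 [set x | J x = b])).
End Proj.
End Defs.

From HB Require Import structures.
From mathcomp Require Import all_boot all_order all_algebra.
From mathcomp Require Import all_classical all_reals all_analysis.
From mathcomp Require Import ring.
Import Order.TTheory GRing.Theory Num.Theory.
Import numFieldNormedType.Exports.
Local Open Scope classical_set_scope.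
Local Open Scope ring_scope.

Set Implicit Arguments.
Unset Strict Implicit.
Unset Printing Implicit Defensive.

(* The kernel N is spanned by the unit vector e = J u, and a cubic satisfies
   F(xi u)(t u) = xi^3 t F(u)(u); hence the projection of F(xi e) onto N is
   xi^3 F(u)(u) e.  Dissipativity against v = 0 gives F(u)(u) <= -c |u|^4 < 0,
   so C := - F(u)(u) works. *)

Section Scalable.
Variables (R : pzRingType) (V : lmodType R) (f : V -> R).
Hypothesis f_affine : forall a x y, f (a *: x + y) = a * f x + f y.

Lemma affine_map0 : f 0 = 0.
Proof.
have := f_affine 1 0 0; rewrite scaler0 addr0 mul1r => /eqP.
by rewrite -subr_eq subrr eq_sym => /eqP.
Qed.

Lemma affine_mapZ a x : f (a *: x) = a * f x.
Proof. by have := f_affine a x 0; rewrite !addr0 affine_map0 addr0. Qed.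
End Scalable.

Section InnerProduct.
Variables (R : realType) (H : normedModType R) (ip : H -> H -> R).
Hypothesis ipP : inner_product ip.

Lemma inner_productZl a x z : ip (a *: x) z = a * ip x z.
Proof. by case: ipP => ipD _ _; apply: (affine_mapZ (fun a x y => ipD a x y z)). Qed.

Lemma inner_productZZ s t x : ip (s *: x) (t *: x) = s * t * `|x| ^+ 2.
Proof.
case: (ipP) => _ ipC ipN.
by rewrite inner_productZl ipC inner_productZl ipN mulrA.
Qed.
End InnerProduct.

Section Cubic.
Variables (R : realType) (X : normedModType R) (F : X -> X -> R).
Hypothesis F_cubic : cubic_dual F.

Lemma cubic_dualZ a b u v : F (a *: u) (b *: v) = a ^+ 3 * b * F u v.
Proof.
case: F_cubic => T [[T1 T2 T3 T4] _ FT].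
have T1Z a' x y z w : T (a' *: x) y z w = a' * T x y z w.
  exact: (affine_mapZ (fun a x y' => T1 a x y' y z w)).
have T2Z a' x y z w : T y (a' *: x) z w = a' * T y x z w.
  exact: (affine_mapZ (fun a x y' => T2 a x y' y z w)).
have T3Z a' x y z w : T y z (a' *: x) w = a' * T y z x w.
  exact: (affine_mapZ (fun a x y' => T3 a x y' y z w)).
have T4Z a' x y z w : T y z w (a' *: x) = a' * T y z w x.
  exact: (affine_mapZ (fun a x y' => T4 a x y' y z w)).
by rewrite !FT T4Z T1Z T2Z T3Z; ring.
Qed.

Lemma cubic_dualZl a u v : F (a *: u) v = a ^+ 3 * F u v.
Proof. by rewrite -[v in LHS]scale1r cubic_dualZ mulr1. Qed.

Lemma cubic_dualZr u t v : F u (t *: v) = t * F u v.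
Proof. by rewrite -[u in LHS]scale1r cubic_dualZ expr1n mul1r. Qed.

Lemma cubic_dual0l v : F 0 v = 0.
Proof. by rewrite -(scale0r v) cubic_dualZl expr0n mul0r. Qed.

Lemma dissipative4_cubic_lt0 c u : 0 < c -> dissipative4 F c -> u != 0 -> F u u < 0.
Proof.
move=> c_gt0 Fdiss u_neq0; have := Fdiss u 0; rewrite subr0 cubic_dual0l subr0.
move/le_lt_trans; apply; rewrite oppr_lt0 mulr_gt0 // exprn_gt0 //.
by rewrite normr_gt0.
Qed.
End Cubic.

Section Projection.
Variables (R : realType) (H X : normedModType R).
Variables (ip : H -> H -> R) (N : set H) (J : {linear X -> H}) (e : H) (u : X).
Hypotheses (ipP : inner_product ip) (N_span : N = [set s *: e | s in [set: R]]).
Hypotheses (e_unit : `|e| = 1) (J_inj : injective J) (Ju : J u = e).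

Lemma preimage_scale a : xget 0 [set x | J x = a *: e] = a *: u.
Proof.
apply: xget_unique => [|x /= Jx]; first by rewrite /= linearZ Ju.
by apply: J_inj; rewrite Jx linearZ Ju.
Qed.

Lemma proj_dual_span (f : X -> R) :
  (forall t x, f (t *: x) = t * f x) -> proj_dual ip N J f = f u *: e.
Proof.
move=> fZ; have ipZZ s t : ip (s *: e) (t *: e) = s * t.
  by rewrite inner_productZZ // e_unit expr1n mulr1.
apply: xget_unique => [|q [Nq q_dual]].
  split=> [|x]; first by rewrite N_span; exists (f u).
  rewrite N_span => -[t _ Jx].
  have -> : x = t *: u by apply: J_inj; rewrite -Jx linearZ Ju.
  by rewrite linearZ Ju ipZZ fZ mulrC.
move: Nq q_dual; rewrite N_span => -[s _ <-] /(_ u).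
rewrite Ju -[X in ip _ X]scale1r ipZZ mulr1 => <- //.
by exists 1; rewrite ?scale1r.
Qed.
End Projection.

Lemma one_dimensional_span (R : realType) (H : normedModType R) (N : set H) e :
  one_dimensional N -> N e -> e != 0 -> N = [set s *: e | s in [set: R]].
Proof.
move=> [e0 [_ ->]] [t0 _ <-] e_neq0.
have t0_neq0 : t0 != 0 by apply: contraNneq e_neq0 => ->; rewrite scale0r.
apply/seteqP; split=> _ [t _ <-].
  by exists (t / t0) => //; rewrite scalerA mulfVK.
by exists (t * t0) => //; rewrite scalerA.
Qed.

Theorem lemma4p1 (R : realType) (H : completeNormedModType R)
  (X : completeNormedModType R)
  (ip : H -> H -> R) (DA : set H) (A : H -> H)
  (J : {linear X -> H}) (F : X -> X -> R) (c : R) (e : H) :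
  inner_product ip -> separable_space (H := H) ->
  lin_op_on DA A -> symmetric_op ip DA A -> nonpositive_op ip DA A ->
  one_dimensional (kernel_op DA A) ->
  continuous J -> injective J -> dense (range J) ->
  DA `<=` range J ->
  cubic_dual F -> 0 < c -> dissipative4 F c ->
  kernel_op DA A e -> `|e| = 1 ->
  exists C : R, 0 < C /\
    forall xi : R,
      Fc ip (kernel_op DA A) J F (xi *: e) = (- (C * xi ^+ 3)) *: e.
Proof.
move=> ipP _ _ _ _ N1 _ J_inj _ DA_J F_cubic c_gt0 Fdiss Ne e_unit.
have e_neq0 : e != 0 by rewrite -normr_gt0 e_unit.
have N_span := one_dimensional_span N1 Ne e_neq0.
have [u _ Ju] : range J e by apply: DA_J; case: Ne.
have u_neq0 : u != 0 by apply: contraNneq e_neq0 => u0; rewrite -Ju u0 linear0.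
exists (- F u u); split; first by rewrite oppr_gt0 (dissipative4_cubic_lt0 F_cubic c_gt0 Fdiss).
move=> xi; rewrite /Fc (preimage_scale J_inj Ju).
rewrite (proj_dual_span ipP N_span e_unit J_inj Ju (cubic_dualZr F_cubic _)).
by rewrite (cubic_dualZl F_cubic) mulNr opprK mulrC.
Qed.
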